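(* For every positive integer $n$, $$\big((\mathrm{Id}\cdot\mu)\ast\delta\big)(n)=-\big(\mathrm{Id}\ast(\mu\delta)\big)(n),$$ where $\mathrm{Id}\cdot\mu$ is $n\mapsto n\mu(n)$ and $\mu\delta$ is the pointwise product.
   Context: The arithmetic derivative $\delta$ is defined by $\delta(p)=1$ for every prime $p$ and $\delta(mn)=m\delta(n)+n\delta(m)$ for all positive integers $m,n$; equivalently $\delta(1)=0$ and $\delta(n)=n\sum_{p^\alpha\| n}\alpha/p$. $\mathrm{Id}(n)=n$, $\mu$ is the Möbius function. The Dirichlet convolution is $(u\ast v)(n)=\sum_{d\mid n}u(d)v(n/d)$. *)

From mathcomp Require Import all_boot all_order all_algebra.
Set Implicit Arguments. Unset Strict Implicit. Unset Printing Implicit Defensive.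
Import GRing.Theory Num.Theory.
Local Open Scope ring_scope.

(* Arithmetic derivative: delta(n) = n * sum_{p^a || n} a/p = sum_{p | n} a * (n/p).
   delta 1 = 0 (primes 1 = [::]); value at 0 is irrelevant (positive n only). *)
Definition arith_deriv (n : nat) : nat :=
  (\sum_(p <- primes n) logn p n * (n %/ p))%N.

(* Moebius function: 0 if some p^2 | n, else (-1)^(number of prime factors). *)
Definition moebius (n : nat) : int :=
  if [forall p : 'I_n.+1, (p.+1 ^ 2 %| n)%N ==> (p == 0%N :> nat)]
  then (-1) ^+ size (primes n) else 0.

Definition dconv (u v : nat -> int) (n : nat) : int :=
  \sum_(d <- divisors n) u d * v (n %/ d)%N.

Definition IdF (n : nat) : int := n%:Z.

From mathcomp Require Import all_boot all_order all_algebra ring.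
Import GRing.Theory Num.Theory.

Set Implicit Arguments.
Unset Strict Implicit.
Unset Printing Implicit Defensive.

(* Proof of  ((Id.mu) * delta)(n) = - (Id * (mu.delta))(n)  for n > 0.
   Reversing the divisor sum on the right, the two convolutions add up to
     sum_{d | n} mu(d) * (d * delta(n/d) + (n/d) * delta(d)),
   and by the Leibniz rule  delta(a b) = a delta(b) + b delta(a)  applied to
   n = d * (n/d) this is  delta(n) * sum_{d | n} mu(d). *)

Lemma arith_derivE n s : uniq s -> {subset primes n <= s} ->
  arith_deriv n = \sum_(p <- s) logn p n * (n %/ p).
Proof.
move=> s_uniq sub_s; rewrite (bigID (mem (primes n))) /=.
rewrite [X in _ + X]big1 ?addn0; last first.
  by move=> p; rewrite -logn_gt0 lt0n negbK => /eqP->.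
rewrite -big_filter /arith_deriv; apply: perm_big.
apply: uniq_perm; rewrite ?primes_uniq ?filter_uniq // => p.
by rewrite mem_filter; case pn: (p \in primes n); rewrite //= sub_s.
Qed.

(* Scaling [m] by [k] inside the term [logn p m * (m / p)] scales the term:
   either p divides m, or the logarithm vanishes. *)
Lemma logn_scale p m k :
  logn p m * (k * m %/ p) = k * (logn p m * (m %/ p)).
Proof.
have [pm | npm] := boolP (p %| m); first by rewrite -muln_divA // mulnCA.
suff -> : logn p m = 0 by rewrite !mul0n muln0.
by apply/eqP; rewrite -leqn0 leqNgt logn_gt0 mem_primes (negbTE npm) !andbF.
Qed.

Lemma arith_deriv_mul a b : 0 < a -> 0 < b ->
  arith_deriv (a * b) = a * arith_deriv b + b * arith_deriv a.
Proof.
move=> a_gt0 b_gt0; have ab_gt0 : 0 < a * b by rewrite muln_gt0 a_gt0.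
have sub_ab m : 0 < m -> m %| a * b -> {subset primes m <= primes (a * b)}.
  move=> m_gt0 m_ab p; rewrite !mem_primes ab_gt0 m_gt0 /=.
  by case/andP=> -> /dvdn_trans ->.
rewrite (arith_derivE (primes_uniq _) (fun _ x => x)).
rewrite (arith_derivE (primes_uniq (a * b)) (sub_ab b b_gt0 (dvdn_mull a (dvdnn b)))).
rewrite (arith_derivE (primes_uniq (a * b)) (sub_ab a a_gt0 (dvdn_mulr b (dvdnn a)))).
rewrite !big_distrr -big_split /=; apply: eq_bigr => p _.
by rewrite -!logn_scale [b * a]mulnC lognM // mulnDl addnC.
Qed.

Lemma arith_deriv1 : arith_deriv 1 = 0.
Proof. by rewrite /arith_deriv big_nil. Qed.

Lemma arith_deriv_divisor n d : 0 < n -> d %| n ->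
  d * arith_deriv (n %/ d) + n %/ d * arith_deriv d = arith_deriv n.
Proof.
move=> n_gt0 d_n; have d_gt0 : 0 < d := dvdn_gt0 n_gt0 d_n.
have nd_gt0 : 0 < n %/ d by rewrite divn_gt0 // dvdn_leq.
by rewrite -arith_deriv_mul // mulnC divnK.
Qed.

Definition squarefree (m : nat) : bool := all (fun q => logn q m < 2) (primes m).

Lemma moebiusE m : 0 < m ->
  moebius m = (if squarefree m then (-1) ^+ size (primes m) else 0)%R.
Proof.
move=> m_gt0; rewrite /moebius; congr (if _ then _ else _).
apply/forallP/allP => [no_sq q | sqf k].
- rewrite mem_primes m_gt0 => /andP[q_pr /= q_m].
  rewrite ltnNge -(pfactor_dvdn 2 q_pr m_gt0); apply/negP => q_sq.
  have q_lt : q.-1 < m.+1 by rewrite ltnS (leq_trans (leq_pred q) (dvdn_leq m_gt0 q_m)).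
  move/implyP: (no_sq (Ordinal q_lt)); rewrite /= prednK ?prime_gt0 // => /(_ q_sq).
  by rewrite -subn1 subn_eq0 leqNgt prime_gt1.
- apply/implyP=> k_sq; apply: contraT; rewrite -lt0n => k_gt0.
  have q_pr : prime (pdiv k.+1) by rewrite pdiv_prime // ltnS.
  have q_sq : pdiv k.+1 ^ 2 %| m by apply: dvdn_trans k_sq; rewrite dvdn_exp2r ?pdiv_dvd.
  have q_m : pdiv k.+1 \in primes m.
    by rewrite mem_primes q_pr m_gt0 (dvdn_trans _ q_sq) // dvdn_exp.
  by move: (sqf _ q_m); rewrite ltnNge -(pfactor_dvdn 2 q_pr m_gt0) q_sq.
Qed.

Lemma moebius_mul_prime_dvd e p : prime p -> 0 < e -> p %| e ->
  moebius (e * p) = 0%R.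
Proof.
move=> p_pr e_gt0 p_e; have p_gt0 := prime_gt0 p_pr.
rewrite moebiusE ?muln_gt0 ?e_gt0 //; case: ifP => // /allP/(_ p).
rewrite mem_primes p_pr muln_gt0 e_gt0 p_gt0 dvdn_mull //= => /(_ isT).
by rewrite lognM // (logn_prime p p_pr) eqxx addn1 ltnS ltnNge logn_gt0 mem_primes p_pr e_gt0 p_e.
Qed.

(* If p does not divide e, multiplying by p adds one prime factor and keeps
   square-freeness, so mu(e * p) = - mu(e). *)
Lemma moebius_mul_prime_ndvd e p : prime p -> 0 < e -> ~~ (p %| e) ->
  moebius (e * p) = (- moebius e)%R.
Proof.
move=> p_pr e_gt0 np_e; have p_gt0 := prime_gt0 p_pr.
have p_ne : p \notin primes e by rewrite mem_primes (negbTE np_e) !andbF.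
have primes_ep : perm_eq (primes (e * p)) (p :: primes e).
  apply: uniq_perm; rewrite /= ?primes_uniq ?p_ne // => q.
  by rewrite primesM // (primes_prime p_pr) mem_seq1 in_cons orbC.
have logn_ep q : q \in primes e -> logn q (e * p) = logn q e.
  move=> q_e; rewrite lognM // (logn_prime q p_pr).
  by case: eqP => [q_p | _]; [rewrite -q_p q_e in p_ne | rewrite addn0].
have sqf_ep : squarefree (e * p) = squarefree e.
  rewrite /squarefree (perm_all _ primes_ep) /= lognM // (logn_prime p p_pr) eqxx.
  rewrite logn_coprime ?prime_coprime //=.
  by apply: eq_in_all => q /logn_ep ->.
rewrite !moebiusE ?muln_gt0 ?e_gt0 // sqf_ep (perm_size primes_ep).
by case: (squarefree e); rewrite ?oppr0 // exprS mulN1r.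
Qed.

Lemma divisors_split_prime n p : prime p -> 0 < n -> p %| n ->
  perm_eq (divisors n)
    ([seq d <- divisors (n %/ p) | ~~ (p %| d)] ++
     [seq e * p | e <- divisors (n %/ p)]).
Proof.
move=> p_pr n_gt0 p_n; have p_gt0 := prime_gt0 p_pr.
set m := n %/ p; have n_mp : n = m * p by rewrite divnK.
have m_gt0 : 0 < m by move: n_gt0; rewrite n_mp muln_gt0 => /andP[].
apply: uniq_perm; first exact: divisors_uniq.
  rewrite cat_uniq filter_uniq ?divisors_uniq ?map_inj_uniq ?divisors_uniq //=;
    last by move=> x y /eqP; rewrite eqn_pmul2r // => /eqP.
  rewrite andbT; apply/hasPn => _ /mapP[e _ ->].
  by rewrite mem_filter dvdn_mull.
move=> d; rewrite mem_cat mem_filter -!dvdn_divisors //.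
have [p_d | np_d] /= := boolP (p %| d).
  apply/idP/mapP => [d_n | [e e_m ->]]; last by rewrite n_mp dvdn_pmul2r ?dvdn_divisors.
  exists (d %/ p); last by rewrite divnK.
  by rewrite -dvdn_divisors // -(dvdn_pmul2r p_gt0) divnK // -n_mp.
have -> : (d \in [seq e * p | e <- divisors m]) = false.
  by apply/mapP => -[e _ d_ep]; rewrite d_ep dvdn_mull in np_d.
by rewrite orbF n_mp Gauss_dvdl // coprime_sym (prime_coprime _ p_pr).
Qed.

Lemma sum_moebius n : 1 < n -> (\sum_(d <- divisors n) moebius d = 0)%R.
Proof.
move=> n_gt1; have n_gt0 := ltnW n_gt1; have p_pr := pdiv_prime n_gt1.
rewrite (perm_big _ (divisors_split_prime p_pr n_gt0 (pdiv_dvd n))).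
set p := pdiv n in p_pr *; set m := n %/ p.
have m_gt0 : 0 < m by rewrite (divn_gt0 _ (prime_gt0 p_pr)) (dvdn_leq n_gt0 (pdiv_dvd n)).
have m_div_gt0 e : e \in divisors m -> 0 < e.
  by rewrite -dvdn_divisors // => /(dvdn_gt0 m_gt0).
have vanish : (\sum_(e <- divisors m | (p %| e)%N) moebius (e * p))%R = 0%R.
  rewrite big_seq_cond big1 // => e /andP[/m_div_gt0 e_gt0 p_e].
  exact: moebius_mul_prime_dvd.
have flip : (\sum_(e <- divisors m | ~~ (p %| e)%N) moebius (e * p) =
             - \sum_(e <- divisors m | ~~ (p %| e)%N) moebius e)%R.
  rewrite -sumrN big_seq_cond [RHS]big_seq_cond.
  apply: eq_bigr => e /andP[/m_div_gt0 e_gt0 np_e].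
  exact: moebius_mul_prime_ndvd.
rewrite big_cat big_map big_filter /= [X in (_ + X)%R](bigID (dvdn p)) /=.
by rewrite vanish flip add0r; apply: subrr.
Qed.

Lemma divn_divisor n d : 0 < n -> d %| n -> n %/ (n %/ d) = d.
Proof. by move=> n_gt0 d_n; rewrite divnA // mulKn // (dvdn_gt0 n_gt0 d_n). Qed.

Lemma sum_divisors_rev (R : nmodType) n (F : nat -> R) : 0 < n ->
  (\sum_(d <- divisors n) F d = \sum_(d <- divisors n) F (n %/ d)%N)%R.
Proof.
move=> n_gt0; rewrite -(big_map (fun d => n %/ d) xpredT F).
have codiv_n d : d \in divisors n -> n %/ d \in divisors n.
  by rewrite -!dvdn_divisors // => /dvdn_div.
apply: perm_big; apply: uniq_perm; rewrite ?divisors_uniq //.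
  rewrite map_inj_in_uniq ?divisors_uniq // => x y; rewrite -!dvdn_divisors // => x_n y_n xy.
  by rewrite -(divn_divisor n_gt0 x_n) -(divn_divisor n_gt0 y_n) xy.
move=> d; apply/idP/mapP => [d_n | [e e_n ->]]; last exact: codiv_n.
by exists (n %/ d); rewrite ?codiv_n // divn_divisor // dvdn_divisors.
Qed.

Local Open Scope ring_scope.

Theorem corollary2p6 (n : nat) : (0 < n)%N ->
  dconv (fun m => m%:Z * moebius m) (fun m => (arith_deriv m)%:Z) n =
  - dconv IdF (fun m => moebius m * (arith_deriv m)%:Z) n.
Proof.
move=> n_gt0; apply/eqP; rewrite -addr_eq0; apply/eqP.
rewrite /dconv /IdF [X in _ + X](sum_divisors_rev _ n_gt0) -big_split /=.
(* Termwise, the Leibniz rule for n = d * (n/d) factors out delta(n). *)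
rewrite (eq_big_seq (fun d => (arith_deriv n)%:Z * moebius d)) => [|d].
- rewrite -big_distrr /=.
  have [n_gt1 | n_le1] := ltnP 1 n; first by rewrite sum_moebius ?mulr0.
  have -> : n = 1%N by apply/anti_leq; rewrite n_le1.
  by rewrite arith_deriv1 mul0r.
- rewrite -dvdn_divisors // => d_n.
  rewrite divn_divisor // -(arith_deriv_divisor n_gt0 d_n) PoszD !PoszM.
  ring.
Qed.
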